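(* Let $(D_n)_{n\geq1}$ be a sequence of non-empty finite sets of non-negative real numbers. Let $\ell_n=\min D_n$, $u_n=\max D_n$, $\Delta_n=u_n-\ell_n$, and let $\delta_n$ be the largest gap between consecutive elements of $D_n$ (with $\delta_n=0$ if $|D_n|=1$). Suppose $(u_n)$ is bounded, $\beta>1$, and for every $n\geq1$, $$\delta_n\leq\sum_{i=1}^{\infty}\Delta_{n+i}\,\beta^{-i}.$$ Then $$\Big\{\sum_{n=1}^\infty a_n\beta^{-n} : a_n\in D_n \text{ for all } n\Big\}=\Big[\sum_{n=1}^\infty \ell_n\beta^{-n},\ \sum_{n=1}^\infty u_n\beta^{-n}\Big].$$ *)

From HB Require Import structures.
From mathcomp Require Import all_boot all_order all_algebra.
From mathcomp Require Import all_classical all_reals all_analysis.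
Set Implicit Arguments. Unset Strict Implicit. Unset Printing Implicit Defensive.
Import Order.TTheory GRing.Theory Num.Theory.
Local Open Scope classical_set_scope.
Local Open Scope ring_scope.

(* sum_{i >= 1} a_i, defined as the limit of the partial sums
   sum_{1 <= i < N} a_i (all series in the statement converge). *)
Definition series1 {R : realType} (a : nat -> R) : R :=
  limn (fun N => \sum_(1 <= i < N) a i).

(* For a finite nonempty set A : min A = inf A, max A = sup A. *)
Definition setmin {R : realType} (A : set R) : R := inf A.
Definition setmax {R : realType} (A : set R) : R := sup A.

(* Largest gap between consecutive elements of A (0 if A has one element):
   the largest y - x with x < y both in A and no element of A strictly
   between them; 0 is included so the value is 0 when there are no gaps. *)
Definition maxgap {R : realType} (A : set R) : R :=
  sup ([set 0] `|` [set d | exists x y, A x /\ A y /\ x < y /\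
          (forall z, A z -> z <= x \/ y <= z) /\ d = y - x]).

From HB Require Import structures.
From mathcomp Require Import all_boot all_order all_algebra.
From mathcomp Require Import all_classical all_reals all_analysis.
From mathcomp Require Import ring lra.
Import Order.TTheory GRing.Theory Num.Theory.
Import numFieldNormedType.Exports.
Set Implicit Arguments. Unset Strict Implicit. Unset Printing Implicit Defensive.
Local Open Scope classical_set_scope.
Local Open Scope ring_scope.

(* Let [L n] and [U n] be the tail sums [\sum_i l_(n+i) beta^-i] and
   [\sum_i u_(n+i) beta^-i], so that [beta L n = l_(n+1) + L (n+1)] and
   [beta U n = u_(n+1) + U (n+1)].  Expand [x] in [[L 0, U 0]] greedily: from a
   remainder [y] in [[L n, U n]], the digits [d] with [beta y - d] in
   [[L (n+1), U (n+1)]] form an interval of length [U (n+1) - L (n+1)], at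
   least the largest gap of [D (n+1)], that reaches [[l_(n+1), u_(n+1)]]; hence
   it contains a point of [D (n+1)].  The remainders stay bounded, so the
   partial sums [x - y_N beta^-N] tend to [x].  The other inclusion is a
   termwise comparison. *)

Lemma finite_set_has_max (d : Order.disp_t) (T : orderType d) (A : set T) :
  finite_set A -> A !=set0 -> exists2 m, A m & forall x, A x -> (x <= m)%O.
Proof.
move=> /finite_seqP[s ->]; elim: s => [|a s IH] [x /= hx] //.
have [[y /= ys]|s0] := pselect ([set` s] !=set0).
- have [m ms mmax] := IH (ex_intro _ y ys).
  exists (Order.max a m) => [|z /=]; rewrite /= in_cons.
    by case: leP => _; rewrite ?eqxx ?ms ?orbT.
  by case/orP => [/eqP->|/mmax zm]; rewrite le_max ?lexx ?zm ?orbT.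
- exists a => [|z /=]; rewrite /= in_cons ?eqxx //.
  by case/orP => [/eqP->//|zs]; case: s0; exists z.
Qed.

Lemma finite_set_has_min (d : Order.disp_t) (T : orderType d) (A : set T) :
  finite_set A -> A !=set0 -> exists2 m, A m & forall x, A x -> (m <= x)%O.
Proof. exact: (@finite_set_has_max _ T^d). Qed.

Section FiniteSetExtrema.
Variable R : realType.
Implicit Types (A : set R) (m p q x y : R).

Lemma sup_eq_max A m : A m -> (forall x, A x -> x <= m) -> sup A = m.
Proof.
move=> Am mmax; apply/le_anti/andP; split.
  by apply: ge_sup; [exists m | move=> x /mmax].
by apply: ub_le_sup; first by exists m => x /mmax.
Qed.

Lemma inf_eq_min A m : A m -> (forall x, A x -> m <= x) -> inf A = m.
Proof.
move=> Am mmin; apply/le_anti/andP; split; last first.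
  by apply: lb_le_inf; [exists m | move=> x /mmin].
by apply: ge_inf; first by exists m => x /mmin.
Qed.

Lemma setmaxP A : finite_set A -> A !=set0 ->
  A (setmax A) /\ forall x, A x -> x <= setmax A.
Proof.
by move=> finA /(finite_set_has_max finA)[m Am mmax]; rewrite /setmax (sup_eq_max Am mmax).
Qed.

Lemma setminP A : finite_set A -> A !=set0 ->
  A (setmin A) /\ forall x, A x -> setmin A <= x.
Proof.
by move=> finA /(finite_set_has_min finA)[m Am mmin]; rewrite /setmin (inf_eq_min Am mmin).
Qed.

Lemma gap_le_maxgap A x y : finite_set A -> A x -> A y -> x < y ->
  (forall z, A z -> z <= x \/ y <= z) -> y - x <= maxgap A.
Proof.
move=> finA Ax Ay xy xy_gap.
have [_ maxA] := setmaxP finA (ex_intro _ x Ax).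
have [_ minA] := setminP finA (ex_intro _ x Ax).
apply: ub_le_sup; last by right; exists x, y.
exists (setmax A - setmin A) => _ [->|[x' [y' [Ax' [Ay' [_ [_ ->]]]]]]].
  by rewrite subr_ge0 (le_trans (minA _ Ax)) ?maxA.
by rewrite lerB ?maxA ?minA.
Qed.

(* Take the largest point [a <= q] of [A]; if [a < p], the next point of [A]
   lies beyond [q], so [A] has a gap longer than [q - p]. *)
Lemma maxgap_itv_meet A p q : finite_set A -> A !=set0 ->
  p <= setmax A -> setmin A <= q -> maxgap A <= q - p ->
  exists2 d, A d & p <= d <= q.
Proof.
move=> finA A0 p_max min_q gap_qp.
have [minAA _] := setminP finA A0; have [maxAA _] := setmaxP finA A0.
have [a [Aa aq] amax] := finite_set_has_max (finite_setIl [set d | d <= q] finA)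
  (ex_intro _ _ (conj minAA min_q)).
have [pa|ap] := leP p a; first by exists a; rewrite ?pa.
have [b [Ab ab] bmin] := finite_set_has_min (finite_setIl [set d | a < d] finA)
  (ex_intro _ _ (conj maxAA (lt_le_trans ap p_max))).
have qb : q < b by rewrite ltNge; apply/negP => bq; move: (amax b (conj Ab bq)); rewrite leNgt ab.
have : b - a <= maxgap A.
  apply: gap_le_maxgap => // z Az; have [za|az] := leP z a; [by left | right].
  exact: bmin.
lra.
Qed.

End FiniteSetExtrema.

Section BetaExpansion.
Variables (R : realType) (beta : R).
Hypothesis beta_gt1 : 1 < beta.

Let beta_gt0 : 0 < beta. Proof. exact: lt_trans beta_gt1. Qed.
Let expr_beta_neq0 n : beta ^+ n != 0. Proof. by rewrite expf_neq0 // gt_eqF. Qed.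

Definition partial_expansion (c : nat -> R) N := \sum_(1 <= i < N) c i / beta ^+ i.
Definition expansion (c : nat -> R) := series1 (fun i => c i / beta ^+ i).
Definition tail_expansion (c : nat -> R) n := expansion (fun i => c (n + i)%N).
Definition bounded_digits (c : nat -> R) M := forall i, (1 <= i)%N -> 0 <= c i <= M.

Lemma sum_expr_beta_le N : \sum_(1 <= i < N) beta ^- i <= (beta - 1)^-1.
Proof.
have beta1_gt0 : 0 < beta - 1 by rewrite subr_gt0.
have geometric_sum n : (beta - 1) * \sum_(1 <= i < n.+1) beta ^- i = 1 - beta ^- n.
  elim: n => [|n IH]; first by rewrite big_geq // mulr0 expr0 invr1 subrr.
  by rewrite big_nat_recr //= mulrDr IH exprS; field; rewrite expr_beta_neq0 gt_eqF.
case: N => [|N]; first by rewrite big_geq // invr_ge0 ltW.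
rewrite -(ler_pM2l beta1_gt0) mulfV ?gt_eqF // geometric_sum.
by rewrite gerBl invr_ge0 exprn_ge0 // ltW.
Qed.

Lemma partial_expansion_bounded c M N : bounded_digits c M ->
  0 <= partial_expansion c N <= M / (beta - 1).
Proof.
move=> cM; rewrite /partial_expansion; apply/andP; split.
  rewrite big_nat_cond sumr_ge0 // => i /andP[/andP[i1 _] _].
  by have /andP[ci0 _] := cM i i1; rewrite divr_ge0 // exprn_ge0 // ltW.
have M0 : 0 <= M by have /andP[c1_ge0 c1M] := cM 1%N isT; exact: le_trans c1_ge0 c1M.
apply: (le_trans (y := M * \sum_(1 <= i < N) beta ^- i)); last first.
  by rewrite ler_wpM2l // sum_expr_beta_le.
rewrite mulr_sumr ler_sum_nat // => i /andP[i1 _].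
by have /andP[_ ciM] := cM i i1; rewrite ler_pM2r // invr_gt0 exprn_gt0.
Qed.

Lemma nondecreasing_partial_expansion c : (forall i, (1 <= i)%N -> 0 <= c i) ->
  {homo partial_expansion c : n m / (n <= m)%N >-> n <= m}.
Proof.
move=> c0; apply/nondecreasing_seqP => -[|n]; first by rewrite /partial_expansion !big_geq.
by rewrite /partial_expansion [leRHS]big_nat_recr //= lerDl divr_ge0 ?c0 // exprn_ge0 // ltW.
Qed.

Lemma cvg_partial_expansion c M : bounded_digits c M ->
  partial_expansion c @ \oo --> expansion c.
Proof.
move=> cM; apply: nondecreasing_is_cvgn.
  by apply: nondecreasing_partial_expansion => i /cM/andP[].
exists (M / (beta - 1)) => _ [N _ <-].
by have /andP[] := partial_expansion_bounded N cM.
Qed.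

Lemma expansion_bounded c M : bounded_digits c M -> 0 <= expansion c <= M / (beta - 1).
Proof.
move=> cM; have cvg_c : cvgn (partial_expansion c) := cvgP _ (cvg_partial_expansion cM).
apply/andP; split; [apply: limr_ge | apply: limr_le] => //.
all: by apply: nearW => N; have /andP[] := partial_expansion_bounded N cM.
Qed.

Lemma partial_expansionS c N :
  beta * partial_expansion c N.+2 = c 1%N + partial_expansion (fun i => c i.+1) N.+1.
Proof.
rewrite /partial_expansion big_nat_recl // mulrDr mulr_sumr.
congr (_ + _); last apply: eq_bigr => i _.
all: by rewrite exprS ?expr0; field; rewrite ?expr_beta_neq0 gt_eqF.
Qed.

Lemma expansionS c M : bounded_digits c M ->
  beta * expansion c = c 1%N + expansion (fun i => c i.+1).
Proof.
move=> cM; have cMS : bounded_digits (fun i => c i.+1) M by move=> i _; exact: cM.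
apply: (cvg_unique (@Rhausdorff R) (F := (fun N => beta * partial_expansion c N.+2) @ \oo)).
- by apply: cvgMl_tmp; move: (cvg_partial_expansion cM); rewrite -2!cvg_shiftS.
- rewrite (_ : (fun N => _) = fun N => c 1%N + partial_expansion (fun i => c i.+1) N.+1).
    by apply: cvgD; [exact: cvg_cst | rewrite cvg_shiftS; exact: cvg_partial_expansion cMS].
  by apply: funext => N; rewrite partial_expansionS.
Qed.

Lemma expansionB c d M : bounded_digits c M -> bounded_digits d M ->
  expansion (fun i => c i - d i) = expansion c - expansion d.
Proof.
move=> cM dM; apply: (cvg_lim (@Rhausdorff R)).
rewrite (_ : (fun N => _) = partial_expansion c - partial_expansion d).
  exact: cvgB (cvg_partial_expansion cM) (cvg_partial_expansion dM).
apply: funext => N; rewrite /partial_expansion !fctE -sumrB.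
by apply: eq_bigr => i _; rewrite mulrBl.
Qed.

Lemma ler_expansion c d M : bounded_digits c M -> bounded_digits d M ->
  (forall i, (1 <= i)%N -> c i <= d i) -> expansion c <= expansion d.
Proof.
move=> cM dM cd; apply: ler_lim; [exact: cvgP (cvg_partial_expansion cM)
  | exact: cvgP (cvg_partial_expansion dM) | apply: nearW => N].
apply: ler_sum_nat => i /andP[i1 _].
by rewrite ler_wpM2r ?cd // invr_ge0 exprn_ge0 // ltW.
Qed.

Lemma bounded_digits_shift c M n : bounded_digits c M ->
  bounded_digits (fun i => c (n + i)%N) M.
Proof. by move=> cM i i1; apply: cM; rewrite addn_gt0 i1 orbT. Qed.

Lemma tail_expansionS c M n : bounded_digits c M ->
  beta * tail_expansion c n = c n.+1 + tail_expansion c n.+1.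
Proof.
move=> cM; rewrite /tail_expansion (expansionS (bounded_digits_shift n cM)) addn1.
by congr (_ + expansion _); apply: funext => i; rewrite addSnnS.
Qed.

Section GreedyExpansion.
Variables (D : nat -> set R) (L U : nat -> R) (B : R) (digit : nat -> R -> R).
Hypothesis L_ge0 : forall n, 0 <= L n.
Hypothesis U_le : forall n, U n <= B.
Hypothesis digitP : forall n y, L n <= y <= U n ->
  D n.+1 (digit n y) /\ L n.+1 <= beta * y - digit n y <= U n.+1.

Fixpoint remainder x n :=
  if n is k.+1 then beta * remainder x k - digit k (remainder x k) else x.

Definition greedy_digits x n := if n is k.+1 then digit k (remainder x k) else 0.

Lemma remainder_itv x : L 0 <= x <= U 0 -> forall n, L n <= remainder x n <= U n.
Proof. by move=> x_itv; elim=> [|n IH] //=; have [_] := digitP IH. Qed.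

Lemma greedy_digitsP x : L 0 <= x <= U 0 ->
  forall n, (1 <= n)%N -> D n (greedy_digits x n).
Proof. by move=> x_itv [|n] // _; have [] := digitP (remainder_itv x_itv n). Qed.

Lemma partial_expansion_greedy x N :
  partial_expansion (greedy_digits x) N.+1 = x - remainder x N / beta ^+ N.
Proof.
elim: N => [|N IH]; first by rewrite /partial_expansion big_geq // expr0 divr1 subrr.
rewrite /partial_expansion big_nat_recr //= -/(partial_expansion _ _) IH exprS.
by field; rewrite expr_beta_neq0 gt_eqF.
Qed.

Lemma expansion_greedy x : L 0 <= x <= U 0 -> expansion (greedy_digits x) = x.
Proof.
move=> x_itv; have rem_to0 : (fun N => remainder x N / beta ^+ N) @ \oo --> 0.
  apply: (@squeeze_cvgr _ _ _ _ (cst 0) (fun N => B * beta^-1 ^+ N)); last first.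
  - rewrite -[X in _ --> X](mulr0 B); apply: cvgMl_tmp; apply: cvg_expr.
    by rewrite ger0_norm ?invr_ge0 ?ltW // invf_lt1.
  - exact: cvg_cst.
  apply: nearW => N; have /andP[Lr rU] := remainder_itv x_itv N.
  have betaN_gt0 : 0 < beta ^+ N by rewrite exprn_gt0.
  rewrite /= divr_ge0 ?(le_trans (L_ge0 N) Lr) ?(ltW betaN_gt0) //= exprVn.
  by rewrite ler_wpM2r ?invr_ge0 ?(ltW betaN_gt0) // (le_trans rU).
apply: (cvg_lim (@Rhausdorff R)).
rewrite -(cvg_shiftS (partial_expansion (greedy_digits x))).
rewrite (_ : (fun N => _) = fun N => x - remainder x N / beta ^+ N); last first.
  by apply: funext => N; exact: partial_expansion_greedy.
by have := cvgB (cvg_cst x) rem_to0; rewrite subr0; apply.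
Qed.

End GreedyExpansion.
End BetaExpansion.

Section DigitSets.
Variables (R : realType) (D : nat -> set R) (beta M : R).
Hypothesis D_finite : forall n, (1 <= n)%N -> finite_set (D n).
Hypothesis D_neq0 : forall n, (1 <= n)%N -> D n !=set0.
Hypothesis D_ge0 : forall n, (1 <= n)%N -> D n `<=` [set x | 0 <= x].
Hypothesis setmax_D_le : forall n, (1 <= n)%N -> setmax (D n) <= M.
Hypothesis beta_gt1 : 1 < beta.
Hypothesis maxgap_D_le : forall n, (1 <= n)%N ->
  maxgap (D n) <= expansion beta (fun i => setmax (D (n + i)%N) - setmin (D (n + i)%N)).

Local Notation l := (fun n => setmin (D n)).
Local Notation u := (fun n => setmax (D n)).
Local Notation L := (tail_expansion beta l).
Local Notation U := (tail_expansion beta u).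

Lemma bounded_digits_D a : (forall n, (1 <= n)%N -> D n (a n)) -> bounded_digits a M.
Proof.
move=> aD n n1; have [_ maxD] := setmaxP (D_finite n1) (D_neq0 n1).
by rewrite (D_ge0 n1 (aD n n1)) (le_trans (maxD _ (aD n n1))) ?setmax_D_le.
Qed.

Lemma bounded_digits_setmin : bounded_digits l M.
Proof. by apply: bounded_digits_D => n n1; have [] := setminP (D_finite n1) (D_neq0 n1). Qed.

Lemma bounded_digits_setmax : bounded_digits u M.
Proof. by apply: bounded_digits_D => n n1; have [] := setmaxP (D_finite n1) (D_neq0 n1). Qed.

Lemma greedy_step n y : L n <= y <= U n ->
  exists d, D n.+1 d /\ L n.+1 <= beta * y - d <= U n.+1.
Proof.
move=> /andP[Ly yU].
have bl := bounded_digits_setmin; have bu := bounded_digits_setmax.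
have Ln := tail_expansionS beta_gt1 n bl; have Un := tail_expansionS beta_gt1 n bu.
have beta_gt0 : 0 < beta := lt_trans ltr01 beta_gt1.
have betaLy : beta * L n <= beta * y by rewrite ler_pM2l.
have betayU : beta * y <= beta * U n by rewrite ler_pM2l.
have gap : maxgap (D n.+1) <= U n.+1 - L n.+1.
  rewrite -(expansionB beta_gt1 (bounded_digits_shift n.+1 bu) (bounded_digits_shift n.+1 bl)).
  exact: maxgap_D_le.
have [d Dd /andP[d1 d2]] := maxgap_itv_meet (p := beta * y - U n.+1) (q := beta * y - L n.+1)
  (D_finite (ltn0Sn n)) (D_neq0 (ltn0Sn n)) ltac:(lra) ltac:(lra) ltac:(lra).
by exists d; split => //; apply/andP; split; lra.
Qed.

Lemma expansion_D_itv a : (forall n, (1 <= n)%N -> D n (a n)) ->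
  expansion beta l <= expansion beta a <= expansion beta u.
Proof.
move=> aD; have aM := bounded_digits_D aD.
apply/andP; split.
- apply: (ler_expansion beta_gt1 bounded_digits_setmin aM) => n n1.
  by have [_] := setminP (D_finite n1) (D_neq0 n1); apply; exact: aD.
- apply: (ler_expansion beta_gt1 aM bounded_digits_setmax) => n n1.
  by have [_] := setmaxP (D_finite n1) (D_neq0 n1); apply; exact: aD.
Qed.

Lemma itv_expansion_D x : expansion beta l <= x <= expansion beta u ->
  exists2 a, (forall n, (1 <= n)%N -> D n (a n)) & x = expansion beta a.
Proof.
move=> x_itv.
pose digit n y := xget 0 [set d | D n.+1 d /\ L n.+1 <= beta * y - d <= U n.+1].
have digitP n y : L n <= y <= U n ->
    D n.+1 (digit n y) /\ L n.+1 <= beta * y - digit n y <= U n.+1.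
  by move=> /greedy_step; exact: xgetPex.
have L_ge0 n : 0 <= L n.
  by have /andP[] := expansion_bounded beta_gt1 (bounded_digits_shift n bounded_digits_setmin).
have U_le n : U n <= M / (beta - 1).
  by have /andP[] := expansion_bounded beta_gt1 (bounded_digits_shift n bounded_digits_setmax).
exists (greedy_digits beta digit x); first exact: (greedy_digitsP digitP).
by rewrite (expansion_greedy beta_gt1 L_ge0 U_le digitP).
Qed.

End DigitSets.

Theorem lemma2p1 (R : realType) (D : nat -> set R) (beta : R) :
  (forall n, (1 <= n)%N -> finite_set (D n)) ->
  (forall n, (1 <= n)%N -> D n !=set0) ->
  (forall n, (1 <= n)%N -> D n `<=` [set x | 0 <= x]) ->
  (exists M : R, forall n, (1 <= n)%N -> setmax (D n) <= M) ->
  1 < beta ->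
  (forall n, (1 <= n)%N ->
     maxgap (D n) <=
       series1 (fun i => (setmax (D (n + i)%N) - setmin (D (n + i)%N)) / beta ^+ i)) ->
  [set x | exists a : nat -> R,
      (forall n, (1 <= n)%N -> D n (a n)) /\ x = series1 (fun n => a n / beta ^+ n)]
  = `[series1 (fun n => setmin (D n) / beta ^+ n),
      series1 (fun n => setmax (D n) / beta ^+ n)]%classic.
Proof.
move=> D_finite D_neq0 D_ge0 [M setmax_D_le] beta_gt1 maxgap_D_le.
apply/seteqP; split => x /=; rewrite in_itv /=.
- move=> [a [aD ->]].
  exact: (expansion_D_itv D_finite D_neq0 D_ge0 setmax_D_le beta_gt1 aD).
- move=> /(itv_expansion_D D_finite D_neq0 D_ge0 setmax_D_le beta_gt1 maxgap_D_le).
  by move=> [a aD ->]; exists a.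
Qed.
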